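(* Let $k$ be an algebraically closed field, $\Lambda$ a basic finite-dimensional $k$-algebra, and let $M$ and $N$ be $d$-dimensional $\Lambda$-modules. The following are equivalent: (1) There exist composition series $(0)=M_0\subseteq M_1\subseteq\cdots\subseteq M_d=M$ and $(0)=N_0\subseteq N_1\subseteq\cdots\subseteq N_d=N$ such that $M_i/M_{i-1}\simeq N_i/N_{i-1}$ for $1\leq i\leq d$. (2) For any orthogonal set $E$ of idempotents in $\Lambda$, there exist triangular representations $\mu,\nu\in\mathrm{mod}_d\Lambda$ of $M$ and $N$ respectively such that $\mu(e)=\nu(e)$ for all $e\in E$. (3) There exist a complete orthogonal set $E$ of primitive idempotents in $\Lambda$ and triangular representations $\mu,\nu\in\mathrm{mod}_d\Lambda$ of $M$ and $N$ respectively such that $\mu(e)=\nu(e)$ for all $e\in E$.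
   Context: A $d$-dimensional representation of $\Lambda$ is a $k$-algebra homomorphism $\rho:\Lambda\to M_d(k)$; it is a representation of the module $M$ if $k^d$ with the structure $\lambda\cdot v=\rho(\lambda)v$ is isomorphic to $M$. $\mathrm{mod}_d\Lambda$ is the set of all such representations. A representation is triangular if all $\rho(\lambda)$ are upper triangular matrices. A set of idempotents is orthogonal if $e_ie_j=0$ for $i\neq j$; a nonzero idempotent is primitive if it is not a sum of two nonzero orthogonal idempotents; an orthogonal set of primitive idempotents is complete if it is not a proper subset of a larger orthogonal set of primitive idempotents. *)

From HB Require Import structures.
From mathcomp Require Import all_boot all_order all_algebra.
From mathcomp Require Import falgebra.
Set Implicit Arguments. Unset Strict Implicit. Unset Printing Implicit Defensive.
Import GRing.Theory.
Local Open Scope ring_scope.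

Section Defs.
Variables (k : fieldType) (A : falgType k).

Definition idempotent (e : A) : Prop := e * e = e.

Definition orthogonal_idempotents (E : {pred A}) : Prop :=
  (forall e, e \in E -> idempotent e) /\
  (forall e f, e \in E -> f \in E -> e != f -> e * f = 0).

Definition primitive_idempotent (e : A) : Prop :=
  [/\ idempotent e, e != 0 &
      ~ (exists f g : A, idempotent f /\ idempotent g /\ f != 0 /\ g != 0 /\
                          f * g = 0 /\ g * f = 0 /\ e = f + g)].

Definition orthogonal_primitive_set (E : {pred A}) : Prop :=
  orthogonal_idempotents E /\ (forall e, e \in E -> primitive_idempotent e).

Definition complete_orthogonal_primitive_set (E : {pred A}) : Prop :=
  orthogonal_primitive_set E /\
  (forall F : {pred A}, orthogonal_primitive_set F ->
     {subset E <= F} -> {subset F <= E}).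

(* the right ideals eA and fA are isomorphic as right A-modules
   (fA = {y | f * y = y}; homomorphisms are given on all of A,
   which loses nothing since eA is a direct summand via x |-> e x) *)
Definition rideal_iso (e f : A) : Prop :=
  exists phi psi : A -> A,
  (forall x y, phi (x + y) = phi x + phi y) /\
  (forall x y, psi (x + y) = psi x + psi y) /\
  (forall x l, phi (x * l) = phi x * l) /\
  (forall x l, psi (x * l) = psi x * l) /\
  (forall x, f * phi (e * x) = phi (e * x)) /\
  (forall x, e * psi (f * x) = psi (f * x)) /\
  (forall x, psi (phi (e * x)) = e * x) /\
  (forall x, phi (psi (f * x)) = f * x).

(* basic algebra (Assem-Simson-Skowronski I.6.1) *)
Definition basic_algebra : Prop :=
  exists E : {pred A}, complete_orthogonal_primitive_set E /\
    (forall e f, e \in E -> f \in E -> e != f -> ~ rideal_iso e f).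

Variable d : nat.

Definition is_rep (rho : A -> 'M[k]_d) : Prop :=
  [/\ (forall (c : k) x y, rho (c *: x + y) = c *: rho x + rho y),
      rho 1 = 1%:M &
      (forall x y, rho (x * y) = rho x *m rho y)].

(* mu is a representation of the module (k^d, rho) : the two module structures
   on k^d are isomorphic *)
Definition rep_of (mu rho : A -> 'M[k]_d) : Prop :=
  exists P : 'M[k]_d, P \in unitmx /\ (forall a, P *m rho a = mu a *m P).

Definition triangular_rep (mu : A -> 'M[k]_d) : Prop :=
  forall a (i j : 'I_d), (j < i)%N -> mu a i j = 0.

(* ---------- submodules and composition series ----------
   The module is k^d (column vectors) with a . v = rho(a) v.  A subspace U
   of k^d is encoded by a matrix S whose row space is {u^T | u in U};
   in this encoding the action of a is right multiplication by rho(a)^T. *)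
Definition act (rho : A -> 'M[k]_d) (a : A) : 'M[k]_d := (rho a)^T.

Definition submodule (rho : A -> 'M[k]_d) (S : 'M[k]_d) : Prop :=
  forall a, (S *m act rho a <= S)%MS.

Definition simple_factor (rho : A -> 'M[k]_d) (S1 S2 : 'M[k]_d) : Prop :=
  (S1 < S2)%MS /\
  (forall U : 'M[k]_d, submodule rho U -> (S1 <= U)%MS -> (U <= S2)%MS ->
     (U == S1)%MS \/ (U == S2)%MS).

Definition composition_series (rho : A -> 'M[k]_d) (S : nat -> 'M[k]_d) : Prop :=
  [/\ (S 0%N == (0 : 'M[k]_d))%MS, (S d == 1%:M)%MS,
      (forall i, (i <= d)%N -> submodule rho (S i)) &
      (forall i, (0 < i <= d)%N -> simple_factor rho (S i.-1) (S i))].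

(* isomorphism of subquotient modules SM2/SM1 (of rhoM) and SN2/SN1 (of rhoN):
   a linear map f : k^d -> k^d (v |-> v *m f in the row encoding) inducing a
   module isomorphism SM2/SM1 -> SN2/SN1 *)
Definition subquot_iso (rhoM : A -> 'M[k]_d) (SM1 SM2 : 'M[k]_d)
                       (rhoN : A -> 'M[k]_d) (SN1 SN2 : 'M[k]_d) : Prop :=
  exists f : 'M[k]_d,
  [/\ (SM2 *m f <= SN2)%MS, (SM1 *m f <= SN1)%MS,
      (forall a, (SM2 *m (act rhoM a *m f - f *m act rhoN a) <= SN1)%MS),
      (SN2 <= SM2 *m f + SN1)%MS &
      (forall v : 'rV[k]_d, (v <= SM2)%MS -> (v *m f <= SN1)%MS -> (v <= SM1)%MS)].

End Defs.

From Pilot Require Import Defs.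
From HB Require Import structures.
From mathcomp Require Import all_boot all_order all_algebra.
From mathcomp Require Import falgebra zify.
From Stdlib Require Import Classical.
Import GRing.Theory.
Local Open Scope ring_scope.
Set Implicit Arguments. Unset Strict Implicit. Unset Printing Implicit Defensive.

(* A triangular representation of M amounts to a basis of k^d whose initial segments
   form a composition series of M; the diagonal entries a |-> mu a j j are characters
   of A (algebra maps A -> k) and describe the one-dimensional composition factors.

   (1) => (2): for orthogonal idempotents E, each step S_(j+1)/S_j of a composition
   series contains a vector that every e in E fixes or kills, so the adapted basis makes
   every mu e diagonal, with diagonal read off from the composition factors.

   (3) => (1): two characters agreeing on a complete set E of primitive idempotents agree
   everywhere.  Some e in E has value 1, otherwise 1 - sum E would contain a further
   primitive idempotent; and a character with value 1 at e is determined on the corner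
   eAe, since an element of eAe on which two such characters differ yields, through a
   Bezout identity for its annihilating polynomial, an idempotent splitting e. *)

Section PidMasks.
Variables (k : fieldType) (d : nat).
Implicit Types (B C W : 'M[k]_d).

Lemma mul_pid_mx_entry n r (M : 'M[k]_(d, n)) i j :
  ((pid_mx r : 'M[k]_d) *m M) i j = (i < r)%N%:R * M i j.
Proof.
rewrite mxE (bigD1 i) //= big1 => [|l nli]; first by rewrite addr0 mxE eqxx.
rewrite mxE; case: eqP => [/val_inj eq_il|_]; last by rewrite mul0r.
by rewrite eq_il eqxx in nli.
Qed.

Lemma mul_mx_pid_entry m r (M : 'M[k]_(m, d)) i j :
  (M *m (pid_mx r : 'M[k]_d)) i j = M i j * (j < r)%N%:R.
Proof.
rewrite mxE (bigD1 j) //= big1 => [|l nlj]; first by rewrite addr0 mxE eqxx.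
rewrite mxE; case: eqP => [/val_inj eq_lj|_]; last by rewrite mulr0.
by rewrite eq_lj eqxx in nlj.
Qed.

Lemma pid_mx_trig B r : is_trig_mx B ->
  (pid_mx r : 'M[k]_d) *m B = pid_mx r *m B *m pid_mx r.
Proof.
move=> /is_trig_mxP trigB; apply/matrixP => l m.
rewrite mul_mx_pid_entry mul_pid_mx_entry.
case: (ltnP m r) => [_|le_rm]; first by rewrite mulr1.
rewrite mulr0; case: (ltnP l r) => [lt_lr|]; last by rewrite mul0r.
by rewrite trigB ?mulr0 // (leq_trans lt_lr le_rm).
Qed.

Lemma pid_mx_trig_strict B (j : 'I_d) : is_trig_mx B -> B j j = 0 ->
  (pid_mx j.+1 : 'M[k]_d) *m B = pid_mx j.+1 *m B *m pid_mx j.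
Proof.
move=> /is_trig_mxP trigB Bjj0; apply/matrixP => l m.
rewrite mul_mx_pid_entry mul_pid_mx_entry.
case: (ltnP m j) => [_|le_jm]; first by rewrite mulr1.
rewrite mulr0; case: (ltnP l j.+1) => [le_lj|]; last by rewrite mul0r.
case: (ltngtP l m) => [lt_lm|lt_ml|/val_inj eq_lm].
- by rewrite trigB ?mulr0.
- by rewrite ltnNge (leq_trans (le_lj : (l <= j)%N) le_jm) in lt_ml.
have eq_mj : m = j by apply/val_inj/eqP; rewrite eqn_leq le_jm -ltnS -eq_lm le_lj.
by rewrite eq_lm eq_mj Bjj0 mulr0.
Qed.

Lemma is_trig_mxB B C : is_trig_mx B -> is_trig_mx C -> is_trig_mx (B - C).
Proof.
move=> /is_trig_mxP trigB /is_trig_mxP trigC.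
by apply/is_trig_mxP => i j lt_ij; rewrite !mxE trigB ?trigC ?subr0.
Qed.

Lemma submx_pid_mulmx m r W (x : 'M[k]_(m, d)) :
  x *m pid_mx r = x -> (x *m W <= (pid_mx r : 'M[k]_d) *m W)%MS.
Proof. by move=> <-; rewrite -mulmxA submxMl. Qed.

Lemma pid_mulmx_coord m r W (v : 'M[k]_(m, d)) :
  W \in unitmx -> (v <= (pid_mx r : 'M[k]_d) *m W)%MS ->
  v *m invmx W *m pid_mx r = v *m invmx W.
Proof.
move=> unitW /submxP[y ->]; rewrite mulmxA mulmxK // -mulmxA.
by rewrite mul_pid_mx minnn pid_mx_minv.
Qed.

Lemma pid_mulmx_sub i j W : (i <= j)%N ->
  ((pid_mx i : 'M[k]_d) *m W <= (pid_mx j : 'M[k]_d) *m W)%MS.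
Proof.
by move=> le_ij; apply: submx_pid_mulmx; rewrite mul_pid_mx (minn_idPl le_ij) pid_mx_minv.
Qed.

Lemma rank_pid_mulmx W i : W \in unitmx -> (i <= d)%N ->
  \rank ((pid_mx i : 'M[k]_d) *m W) = i.
Proof. by move=> unitW le_id; rewrite mxrankMfree ?row_free_unit // rank_pid_mx. Qed.

Lemma row_pid_mulmx i (l : 'I_d) W :
  row l ((pid_mx i : 'M[k]_d) *m W) = (l < i)%N%:R *: row l W.
Proof. by apply/matrixP => a b; rewrite [LHS]mxE mul_pid_mx_entry !mxE. Qed.

Lemma row_sub_pid_mulmx (j : 'I_d) W : (row j W <= (pid_mx j.+1 : 'M[k]_d) *m W)%MS.
Proof.
rewrite rowE; apply: submx_pid_mulmx; apply/matrixP => l m.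
rewrite mul_mx_pid_entry !mxE; case: (m =P j) => [->|_]; last by rewrite andbF mul0r.
by rewrite ltnSn mulr1.
Qed.

Lemma row_notsub_pid_mulmx (j : 'I_d) W :
  W \in unitmx -> ~~ (row j W <= (pid_mx j : 'M[k]_d) *m W)%MS.
Proof.
move=> unitW; apply/negP => /(pid_mulmx_coord unitW).
rewrite rowE mulmxK // => /matrixP /(_ 0 j).
by rewrite mul_mx_pid_entry !mxE !eqxx ltnn mulr0 => /eqP; rewrite eq_sym oner_eq0.
Qed.

End PidMasks.

Section Flags.
Variables (k : fieldType) (A : falgType k) (d : nat).
Implicit Types (rho mu : A -> 'M[k]_d) (W : 'M[k]_d).

Lemma actZD rho c x y : is_rep rho ->
  act rho (c *: x + y) = c *: act rho x + act rho y.
Proof. by case=> linear_rho _ _; rewrite /act linear_rho linearD linearZ. Qed.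

Lemma act0 rho : is_rep rho -> act rho 0 = 0.
Proof.
move=> rep_rho; have := actZD 1 0 0 rep_rho; rewrite !scale1r addr0 => act0D.
by apply: (@addrI _ (act rho 0)); rewrite addr0 -act0D.
Qed.

Lemma act1 rho : is_rep rho -> act rho 1 = 1%:M.
Proof. by case=> _ rho1 _; rewrite /act rho1 trmx1. Qed.

Lemma actM rho x y : is_rep rho -> act rho (x * y) = act rho y *m act rho x.
Proof. by case=> _ _ rhoM; rewrite /act rhoM trmx_mul. Qed.

Definition basis_mx rho W a := W *m act rho a *m invmx W.

(* The rows of [W] form a basis whose initial segments span submodules. *)
Definition flag_basis rho W :=
  W \in unitmx /\ forall a, is_trig_mx (basis_mx rho W a).

Lemma basis_mxE rho W a : W \in unitmx -> W *m act rho a = basis_mx rho W a *m W.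
Proof. by move=> unitW; rewrite /basis_mx mulmxKV. Qed.

Lemma basis_mx_entry rho W a i j :
  basis_mx rho W a i j = (row i W *m act rho a *m invmx W) 0 j.
Proof. by rewrite -!row_mul [RHS]mxE. Qed.

Lemma flag_submodule rho W i : flag_basis rho W ->
  submodule rho ((pid_mx i : 'M[k]_d) *m W).
Proof.
case=> unitW trigB a; rewrite -mulmxA basis_mxE // mulmxA.
by apply: submx_pid_mulmx; rewrite -pid_mx_trig.
Qed.

Lemma flag_eigen rho W a (j : 'I_d) (v : 'rV[k]_d) : flag_basis rho W ->
  (v <= (pid_mx j.+1 : 'M[k]_d) *m W)%MS ->
  (v *m act rho a - basis_mx rho W a j j *: v <= (pid_mx j : 'M[k]_d) *m W)%MS.
Proof.
case=> unitW trigB /(pid_mulmx_coord unitW) vj; set x := v *m invmx W in vj *.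
set B := basis_mx rho W a.
have -> : v *m act rho a - B j j *: v = x *m (B - (B j j)%:M) *m W.
  rewrite mulmxBr mulmxBl mul_mx_scalar -scalemxAl /x mulmxKV //.
  by rewrite -mulmxA -basis_mxE // mulmxA mulmxKV.
apply: submx_pid_mulmx; rewrite -vj -!mulmxA [in LHS](mulmxA (pid_mx j.+1)).
rewrite -pid_mx_trig_strict ?is_trig_mxB ?scalar_mx_is_trig ?trigB //.
by rewrite !mxE eqxx mulr1n subrr.
Qed.

Lemma flag_composition_series rho W : flag_basis rho W ->
  composition_series rho (fun i => (pid_mx i : 'M[k]_d) *m W).
Proof.
move=> flagW; have [unitW _] := flagW; split.
- by rewrite pid_mx_0 mul0mx submx_refl.
- by rewrite pid_mx_1 mul1mx submx1 sub1mx row_full_unit.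
- by move=> i _; apply: flag_submodule.
move=> i /andP[i_gt0 le_id]; have le_i1d : (i.-1 <= d)%N by rewrite (leq_trans (leq_pred _)).
have rank_i := rank_pid_mulmx unitW le_id; have rank_i1 := rank_pid_mulmx unitW le_i1d.
split.
  rewrite ltmxE pid_mulmx_sub ?leq_pred //=; apply/negP => /mxrankS.
  by rewrite rank_i rank_i1 -ltnS prednK // ltnn.
move=> U _ sub1U subU2; have := mxrankS sub1U; have := mxrankS subU2.
rewrite rank_i rank_i1 => rankU_le rankU_ge.
have [rankU_lt|rankU_gt] := leqP (\rank U) i.-1.
  left; apply/andP; split=> //.
  by rewrite -(mxrank_leqif_sup sub1U).2 eqn_leq rank_i1 rankU_lt rankU_ge.
right; apply/andP; split=> //.
by rewrite -(mxrank_leqif_sup subU2).2 eqn_leq rank_i rankU_le /= -(prednK i_gt0).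
Qed.

Lemma flag_subquot_iso rhoM rhoN WM WN (j : 'I_d) :
  flag_basis rhoM WM -> flag_basis rhoN WN ->
  (forall a, basis_mx rhoM WM a j j = basis_mx rhoN WN a j j) ->
  subquot_iso rhoM ((pid_mx j : 'M[k]_d) *m WM) ((pid_mx j.+1 : 'M[k]_d) *m WM)
              rhoN ((pid_mx j : 'M[k]_d) *m WN) ((pid_mx j.+1 : 'M[k]_d) *m WN).
Proof.
move=> [unitM trigM] [unitN trigN] eq_diag; exists (invmx WM *m WN).
have pidWM r : (pid_mx r : 'M[k]_d) *m WM *m (invmx WM *m WN) = pid_mx r *m WN.
  by rewrite mulmxA mulmxK.
split; rewrite ?pidWM ?addsmxSl //.
- move=> a; set BM := basis_mx rhoM WM a; set BN := basis_mx rhoN WN a.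
  have -> : (pid_mx j.+1 : 'M[k]_d) *m WM *m
      (act rhoM a *m (invmx WM *m WN) - invmx WM *m WN *m act rhoN a)
      = pid_mx j.+1 *m (BM - BN) *m WN.
    rewrite /BM /BN /basis_mx mulmxBr (mulmxBr (pid_mx j.+1)) mulmxBl.
    by rewrite !mulmxA !mulmxK // !mulmxKV.
  apply: submx_pid_mulmx; rewrite -pid_mx_trig_strict ?is_trig_mxB ?trigM ?trigN //.
  by rewrite mxE [X in _ + X]mxE eq_diag subrr.
- move=> v _; rewrite mulmxA => /(pid_mulmx_coord unitN); rewrite mulmxK // => vj.
  by rewrite -(mulmxKV unitM v) submx_pid_mulmx.
Qed.

Lemma subquot_iso_diag rhoM rhoN WM WN (j : 'I_d) (M1 M2 N1 N2 : 'M[k]_d) a :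
  flag_basis rhoM WM -> flag_basis rhoN WN ->
  (M1 == (pid_mx j : 'M[k]_d) *m WM)%MS -> (M2 == (pid_mx j.+1 : 'M[k]_d) *m WM)%MS ->
  (N1 == (pid_mx j : 'M[k]_d) *m WN)%MS -> (N2 == (pid_mx j.+1 : 'M[k]_d) *m WN)%MS ->
  subquot_iso rhoM M1 M2 rhoN N1 N2 ->
  basis_mx rhoM WM a j j = basis_mx rhoN WN a j j.
Proof.
move=> flagM flagN /andP[M1_sub sub_M1] /andP[_ sub_M2] /andP[_ sub_N1] /andP[N2_sub _].
case=> f [fM2 fM1 f_act _ f_inj]; have [unitM _] := flagM.
set lM := basis_mx rhoM WM a j j; set lN := basis_mx rhoN WN a j j.
set v := row j WM; set u := v *m f.
have vM2 : (v <= M2)%MS := submx_trans (row_sub_pid_mulmx j WM) sub_M2.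
have uN2 : (u <= (pid_mx j.+1 : 'M[k]_d) *m WN)%MS.
  exact: submx_trans (submxMr f vM2) (submx_trans fM2 N2_sub).
have uN1 : ~~ (u <= N1)%MS.
  apply: contra (row_notsub_pid_mulmx j unitM) => /(f_inj _ vM2) vM1.
  exact: submx_trans vM1 M1_sub.
have eigM : ((v *m act rhoM a - lM *: v) *m f <= N1)%MS.
  apply: submx_trans fM1; apply: submxMr; apply: submx_trans sub_M1.
  exact: flag_eigen flagM (row_sub_pid_mulmx j WM).
have eigN : (u *m act rhoN a - lN *: u <= N1)%MS.
  exact: submx_trans (flag_eigen a flagN uN2) sub_N1.
have commf : (v *m (act rhoM a *m f - f *m act rhoN a) <= N1)%MS.
  exact: submx_trans (submxMr _ vM2) (f_act a).
apply/eqP; rewrite -subr_eq0; apply: contraR uN1 => neq0.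
rewrite -(scale1r u) -(mulVf neq0) -scalerA scalemx_sub //.
(* The eigenvalue defect of [u] is the sum of three defects that all lie in [N1]. *)
have -> : (lM - lN) *: u = v *m (act rhoM a *m f - f *m act rhoN a)
    + (u *m act rhoN a - lN *: u) - (v *m act rhoM a - lM *: v) *m f.
  rewrite /u mulmxBr mulmxBl -scalemxAl !mulmxA scalerBl.
  rewrite addrA (subrK (v *m f *m act rhoN a)) opprB addrC addrA.
  by rewrite (addrAC _ (v *m act rhoM a *m f)) addrK addrC.
by apply: addmx_sub; [exact: addmx_sub commf eigN | rewrite eqmx_opp].
Qed.

Definition flag_rep rho W a := (basis_mx rho W a)^T.

Lemma flag_rep_triangular rho W : is_rep rho -> flag_basis rho W ->
  [/\ is_rep (flag_rep rho W), rep_of (flag_rep rho W) rho &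
      triangular_rep (flag_rep rho W)].
Proof.
move=> rep_rho [unitW trigB]; split.
- split.
  + move=> c x y; rewrite /flag_rep /basis_mx actZD // mulmxDr mulmxDl.
    by rewrite -scalemxAr -scalemxAl linearD linearZ.
  + by rewrite /flag_rep /basis_mx act1 // mulmx1 mulmxV // trmx1.
  + by move=> x y; rewrite /flag_rep -trmx_mul /basis_mx actM // !mulmxA mulmxKV.
- exists (invmx W)^T; split; first by rewrite unitmx_tr unitmx_inv.
  move=> a; rewrite /flag_rep -trmx_mul /basis_mx !mulmxA mulVmx // mul1mx.
  by rewrite trmx_mul /act trmxK.
- by move=> a i j lt_ji; rewrite mxE (is_trig_mxP (trigB a)).
Qed.

Lemma triangular_rep_flag rho mu : triangular_rep mu -> rep_of mu rho ->
  exists W, flag_basis rho W /\ forall a, flag_rep rho W a = mu a.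
Proof.
move=> trig_mu [P [unitP rhoP]]; exists (invmx P)^T.
have flag_repE a : flag_rep rho (invmx P)^T a = mu a.
  rewrite /flag_rep /basis_mx -trmx_inv invmxK /act -!trmx_mul trmxK.
  by rewrite mulmxA rhoP mulmxK.
split=> //; split; first by rewrite unitmx_tr unitmx_inv.
move=> a; apply/is_trig_mxP => i j lt_ij.
by have /matrixP/(_ j i) := flag_repE a; rewrite mxE => ->; apply: trig_mu.
Qed.

End Flags.

Section AdaptedFlag.
Variables (k : fieldType) (A : falgType k) (d : nat).
Variables (rho : A -> 'M[k]_d) (S : nat -> 'M[k]_d).
Hypotheses (rep_rho : is_rep rho) (compS : composition_series rho S).

Lemma comp_ltmx i : (i < d)%N -> (S i < S i.+1)%MS.
Proof. by case: compS => _ _ _ simpleS lt_id; case: (simpleS i.+1 lt_id). Qed.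

Lemma comp_submx i j : (i <= j <= d)%N -> (S i <= S j)%MS.
Proof.
elim: j => [|j IH] /andP[le_ij le_jd]; first by rewrite leqn0 in le_ij; rewrite (eqP le_ij).
case: (ltngtP i j.+1) le_ij => // [lt_ij|->] _; last exact: submx_refl.
by apply: submx_trans (IH _) (ltmxW (comp_ltmx le_jd)); rewrite -ltnS lt_ij ltnW.
Qed.

Lemma comp_rank_add i j : (i <= j <= d)%N -> (\rank (S i) + (j - i) <= \rank (S j))%N.
Proof.
elim: j => [|j IH] /andP[le_ij le_jd].
  by rewrite leqn0 in le_ij; rewrite (eqP le_ij) addn0.
case: (ltngtP i j.+1) le_ij => // [lt_ij|->] _; last by rewrite subnn addn0.
rewrite subSn // addnS; apply: leq_ltn_trans (IH _) (rank_ltmx (comp_ltmx le_jd)).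
by rewrite -ltnS lt_ij ltnW.
Qed.

Lemma comp_rank i : (i <= d)%N -> \rank (S i) = i.
Proof.
move=> le_id; case: compS => /eqmx_rank rank0 /eqmx_rank rankd _ _.
rewrite mxrank0 in rank0; rewrite mxrank1 in rankd.
have := comp_rank_add (i := 0) (j := i); rewrite rank0 subn0 add0n => /(_ le_id) lb.
have := comp_rank_add (i := i) (j := d); rewrite rankd leqnn andbT => /(_ le_id) ub.
by apply/eqP; rewrite eqn_leq lb andbT -(leq_add2r (d - i)) (subnKC le_id).
Qed.

Variables (E : {pred A}) (s : seq A).
Hypotheses (orthE : orthogonal_idempotents E) (uniq_s : uniq s).
Hypotheses (s_sub : forall e, e \in s -> e \in E) (sub_s : forall e, e \in E -> e != 0 -> e \in s).

Lemma act_orthogonal e f : e \in E -> f \in E ->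
  act rho e *m act rho f = if f == e then act rho f else 0.
Proof.
move=> eE fE; rewrite -actM //; case: eqP => [->|/eqP neq_fe]; first by rewrite orthE.1.
by rewrite orthE.2 ?act0.
Qed.

Lemma submx_comp_act (j : 'I_d) (w : 'rV[k]_d) a :
  (w <= S j.+1)%MS -> (w *m act rho a <= S j.+1)%MS.
Proof.
by move=> wS; case: compS => _ _ subS _; apply: submx_trans (submxMr _ wS) (subS _ _ a).
Qed.

(* If some e in s moves a vector w0 of S_(j+1) \ S_j out of S_j, then w0 e works;
   otherwise w0 - sum_e w0 e does, as it is killed by every e in s. *)
Lemma exists_adapted_vector (j : 'I_d) : exists w : 'rV[k]_d,
  [&& (w <= S j.+1)%MS, ~~ (w <= S j)%MS & all (fun e => (w *m act rho e <= w)%MS) s].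
Proof.
have := comp_ltmx (ltn_ord j); rewrite ltmxE => /andP[_ /row_subPn[l notSj]].
set w0 := row l (S j.+1); have w0S : (w0 <= S j.+1)%MS by apply: row_sub.
have [/hasP[e es notSj_e]|/hasPn fixSj] :=
  boolP (has (fun e => ~~ (w0 *m act rho e <= S j)%MS) s).
  exists (w0 *m act rho e); rewrite submx_comp_act //= notSj_e /=.
  apply/allP => f fs; rewrite -mulmxA act_orthogonal ?s_sub //.
  by case: eqP => [->|_]; rewrite ?submx_refl ?mulmx0 ?sub0mx.
have killed f : f \in s -> (w0 - \sum_(e <- s) w0 *m act rho e) *m act rho f = 0.
  move=> fs; rewrite mulmxBl mulmx_suml (big_rem f fs) /= -mulmxA.
  rewrite act_orthogonal ?s_sub // eqxx big1_seq ?addr0 ?subrr // => e /= ef.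
  rewrite -mulmxA act_orthogonal ?s_sub ?(mem_rem ef) //.
  by move: ef; rewrite mem_rem_uniq // inE eq_sym => /andP[/negbTE -> _]; rewrite mulmx0.
exists (w0 - \sum_(e <- s) w0 *m act rho e); apply/and3P; split.
- rewrite addmx_sub // eqmx_opp summx_sub // => e _; exact: submx_comp_act.
- apply: contra notSj => wSj; rewrite -[row l _](subrK (\sum_(e <- s) w0 *m act rho e)).
  by rewrite addmx_sub // big_seq summx_sub // => e es; have := fixSj e es; rewrite negbK.
- by apply/allP => f fs; rewrite killed ?sub0mx.
Qed.

Definition adapted_basis := \matrix_(j < d) xchoose (exists_adapted_vector j).

Let W := adapted_basis.

Lemma adapted_basis_row (j : 'I_d) : [&& (row j W <= S j.+1)%MS, ~~ (row j W <= S j)%MS &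
  all (fun e => (row j W *m act rho e <= row j W)%MS) s].
Proof. by rewrite rowK; exact: (xchooseP (exists_adapted_vector j)). Qed.

Lemma adapted_basis_sub i : (i <= d)%N -> ((pid_mx i : 'M[k]_d) *m W <= S i)%MS.
Proof.
move=> le_id; apply/row_subP => l; rewrite row_pid_mulmx.
case: (ltnP l i) => [lt_li|]; last by rewrite scale0r sub0mx.
have /and3P[lS _ _] := adapted_basis_row l.
by rewrite scale1r (submx_trans lS) // comp_submx // lt_li.
Qed.

Lemma adapted_basis_rank i : (i <= d)%N -> (i <= \rank ((pid_mx i : 'M[k]_d) *m W))%N.
Proof.
elim: i => // i IH lt_id; set j := Ordinal lt_id.
apply: leq_ltn_trans (IH (ltnW lt_id)) (rank_ltmx _); rewrite ltmxE pid_mulmx_sub //=.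
have /and3P[_ notSj _] := adapted_basis_row j; apply: contra notSj => sub_i.
exact: submx_trans (submx_trans (row_sub_pid_mulmx j W) sub_i) (adapted_basis_sub (ltnW lt_id)).
Qed.

Lemma adapted_basis_unit : W \in unitmx.
Proof.
rewrite -row_free_unit /row_free eqn_leq rank_leq_row /=.
by have := adapted_basis_rank (leqnn d); rewrite pid_mx_1 mul1mx.
Qed.

Lemma adapted_basis_comp i : (i <= d)%N -> (S i == (pid_mx i : 'M[k]_d) *m W)%MS.
Proof.
move=> le_id; have sub_i := adapted_basis_sub le_id; rewrite /eqmx sub_i andbT.
by rewrite -(mxrank_leqif_sup sub_i).2 rank_pid_mulmx ?adapted_basis_unit ?comp_rank.
Qed.

Lemma adapted_basis_flag : flag_basis rho W.
Proof.
split=> [|a]; first exact: adapted_basis_unit.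
apply/is_trig_mxP => j i lt_ji; rewrite basis_mx_entry.
have /and3P[jS _ _] := adapted_basis_row j; have /andP[sub_j _] := adapted_basis_comp (ltn_ord j).
have /(pid_mulmx_coord adapted_basis_unit) := submx_trans (submx_comp_act a jS) sub_j.
by move=> /matrixP/(_ 0 i) <-; rewrite mul_mx_pid_entry ltnNge lt_ji mulr0.
Qed.

Lemma adapted_basis_diag e : e \in E -> forall i j : 'I_d, i != j ->
  basis_mx rho W e i j = 0.
Proof.
move=> eE i j neq_ij; rewrite basis_mx_entry.
have [-> | nz_e] := eqVneq e 0; first by rewrite act0 // mulmx0 mul0mx mxE.
have /and3P[_ _ /allP /(_ e (sub_s eE nz_e)) /sub_rVP[c ->]] := adapted_basis_row i.
rewrite -scalemxAl -row_mul mulmxV ?adapted_basis_unit // !mxE.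
by rewrite (negbTE neq_ij) mulr0.
Qed.

Lemma exists_adapted_flag : exists W, [/\ flag_basis rho W,
  forall i, (i <= d)%N -> (S i == (pid_mx i : 'M[k]_d) *m W)%MS &
  forall e, e \in E -> forall i j : 'I_d, i != j -> basis_mx rho W e i j = 0].
Proof.
exists W; split; [exact: adapted_basis_flag | exact: adapted_basis_comp |].
exact: adapted_basis_diag.
Qed.

End AdaptedFlag.

Section Characters.
Variables (k : fieldType) (A : falgType k).

Definition is_char (chi : A -> k) :=
  [/\ forall c x y, chi (c *: x + y) = c * chi x + chi y, chi 1 = 1 &
      forall x y, chi (x * y) = chi x * chi y].

Section CharacterTheory.
Variable chi : A -> k.
Hypothesis char_chi : is_char chi.

Lemma chi0 : chi 0 = 0.
Proof.
case: char_chi => linear_chi _ _; have := linear_chi 1 0 0.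
by rewrite scale1r addr0 mul1r => /(congr1 (fun t => t - chi 0)); rewrite subrr addrK.
Qed.

Lemma chiZ c x : chi (c *: x) = c * chi x.
Proof. by case: char_chi => linear_chi _ _; rewrite -[c *: x]addr0 linear_chi chi0 addr0. Qed.

Lemma chiD x y : chi (x + y) = chi x + chi y.
Proof. by case: char_chi => linear_chi _ _; rewrite -[x]scale1r linear_chi mul1r scale1r. Qed.

Lemma chiB x y : chi (x - y) = chi x - chi y.
Proof. by rewrite chiD -scaleN1r chiZ mulN1r. Qed.

Lemma chi1 : chi 1 = 1.
Proof. by case: char_chi. Qed.

Lemma chiM x y : chi (x * y) = chi x * chi y.
Proof. by case: char_chi. Qed.

Lemma chiX x n : chi (x ^+ n) = chi x ^+ n.
Proof. by elim: n => [|n IH]; rewrite ?expr0 ?chi1 // !exprS chiM IH. Qed.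

Lemma chi_sum (I : Type) (r : seq I) (F : I -> A) :
  chi (\sum_(i <- r) F i) = \sum_(i <- r) chi (F i).
Proof. exact: (big_morph chi chiD chi0). Qed.

Lemma chi_horner (z : A) (p : {poly k}) : chi (horner_alg z p) = p.[chi z].
Proof.
elim/poly_ind: p => [|p c IH]; first by rewrite rmorph0 horner0 chi0.
rewrite rmorphD rmorphM /= horner_algX horner_algC hornerMXaddC chiD chiM IH.
by rewrite chiZ chi1 mulr1.
Qed.

Lemma chi_idempotent_eq1 e : Defs.idempotent e -> chi e != 0 -> chi e = 1.
Proof.
by move=> idem_e nz_e; apply: (mulIf nz_e); rewrite mul1r -chiM idem_e.
Qed.

End CharacterTheory.

Lemma orthogonal_idempotents_free (E : {pred A}) (s : seq A) :
  orthogonal_idempotents E -> uniq s -> (forall e, e \in s -> e \in E /\ e != 0) -> free s.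
Proof.
move=> orthE uniq_s sE; rewrite -[s]/(val (in_tuple s)); apply/freeP => c sum0 i.
have [s_iE nz_si] := sE _ (mem_nth 0 (ltn_ord i)).
have := congr1 (fun v => s`_i * v) sum0; rewrite mulr0 mulr_sumr (bigD1 i) //= big1.
  by rewrite addr0 -scalerAr orthE.1 // => /eqP; rewrite scaler_eq0 (negbTE nz_si) orbF => /eqP.
move=> l neq_li; have [s_lE _] := sE _ (mem_nth 0 (ltn_ord l)).
rewrite -scalerAr orthE.2 ?scaler0 // nth_uniq //.
by apply: contra neq_li => /eqP eq_il; apply/eqP/val_inj.
Qed.

Lemma orthogonal_idempotents_finite (E : {pred A}) : orthogonal_idempotents E ->
  exists s : seq A, [/\ uniq s, (forall e, e \in s -> e \in E) &
                       (forall e, e \in E -> e != 0 -> e \in s)].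
Proof.
move=> orthE; suff max_s s : uniq s -> (forall e, e \in s -> e \in E /\ e != 0) ->
    exists s : seq A, [/\ uniq s, (forall e, e \in s -> e \in E) &
                         (forall e, e \in E -> e != 0 -> e \in s)].
  exact: (max_s [::]).
have [n] := ubnP ((\dim (fullv : {vspace A})).+1 - size s).
elim: n s => // n IH s lt_n uniq_s sE.
have size_s : (size s <= \dim (fullv : {vspace A}))%N.
  have := dimvS (subvf <<s>>%VS).
  by rewrite (eqP (orthogonal_idempotents_free orthE uniq_s sE)).
case: (classic (exists e, [/\ e \in E, e != 0 & e \notin s])) => [[e [eE nz_e notin_s]]|no_e].
  apply: (IH (e :: s)); first by change (size (e :: s)) with (size s).+1; lia.
    by rewrite /= notin_s uniq_s.
  by move=> x; rewrite inE => /orP[/eqP ->|/sE].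
exists s; split=> // [e /sE[]//|e eE nz_e]; apply: contraT => notin_s.
by case: no_e; exists e.
Qed.

Lemma exists_annihilating_poly (z : A) : exists2 p : {poly k}, p != 0 & horner_alg z p = 0.
Proof.
set n := \dim (fullv : {vspace A}); set X := [tuple z ^+ i | i < n.+1].
have /freeP not_free : ~~ free X.
  apply/negP => free_X; have := dimvS (subvf <<X>>%VS).
  by rewrite (eqP free_X) size_tuple ltnn.
have [c [sum0 [i nz_ci]]] : exists c : 'I_n.+1 -> k,
    \sum_(i < n.+1) c i *: X`_i = 0 /\ exists i, c i != 0.
  apply: NNPP => no_c; apply: not_free => c sum0 i; apply/eqP/negPn/negP => nz_ci.
  by apply: no_c; exists c; split=> //; exists i.
exists (\poly_(j < n.+1) c (inord j)).
  apply/eqP => /(congr1 (fun p : {poly k} => p`_i)).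
  by rewrite coef_poly ltn_ord inord_val coef0 => /eqP; rewrite (negbTE nz_ci).
rewrite poly_def linear_sum /= -{}[in RHS]sum0; apply: eq_bigr => j _.
by rewrite (nth_mktuple _ _ j) linearZ /= mulr_algl rmorphXn /= horner_algX inord_val.
Qed.

Lemma primitive_idempotent_corner (e f : A) : primitive_idempotent e -> Defs.idempotent f ->
  e * f = f -> f * e = f -> f = 0 \/ f = e.
Proof.
case=> idem_e _ indec_e idem_f ef fe; apply: NNPP => /not_or_and[nz_f neq_fe].
apply: indec_e; exists f, (e - f); do ![split] => //.
- by rewrite /Defs.idempotent mulrBr !mulrBl idem_e ef fe idem_f subrr subr0.
- exact/eqP.
- by rewrite subr_eq0; apply/eqP => eq_ef; apply: neq_fe.
- by rewrite mulrBr fe idem_f subrr.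
- by rewrite mulrBl ef idem_f subrr.
- by rewrite addrC subrK.
Qed.

Lemma chi_corner_eq0 chi1 chi2 (e z : A) : is_char chi1 -> is_char chi2 ->
  primitive_idempotent e -> chi1 e = 1 -> e * z = z -> z * e = z ->
  chi1 z = 0 -> chi2 z = 0.
Proof.
move=> char1 char2 prim_e chi1e ez ze chi1z; apply: contraTeq isT => nz_c.
set c := chi2 z in nz_c; have [idem_e _ _] := prim_e.
have [p nz_p pz0] := exists_annihilating_poly z.
have [m [q q0 def_p]] := multiplicity_XsubC p 0.
rewrite nz_p /= in q0; rewrite polyC0 subr0 in def_p.
have m_gt0 : (0 < m)%N.
  have := chi_horner char1 z p; rewrite pz0 chi0 // chi1z def_p hornerM hornerXn.
  case: m {def_p} => //; rewrite expr0 mulr1 => /esym q00.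
  by rewrite /root q00 eqxx in q0.
have qc0 : q.[c] = 0.
  have := chi_horner char2 z p; rewrite pz0 chi0 // def_p hornerM hornerXn => /esym/eqP.
  by rewrite mulf_eq0 expf_eq0 (negbTE nz_c) andbF orbF => /eqP.
have coprime_Xq : coprimep ('X ^+ m) q.
  by apply: coprimep_expl; rewrite coprimep_sym -(subr0 'X) -polyC0 coprimep_XsubC.
have [[u v] /= bezout] := Bezout_eq1_coprimepP _ _ coprime_Xq.
set f := horner_alg z (u * 'X ^+ m).
have f_zm : f = horner_alg z u * z ^+ m by rewrite /f rmorphM /= rmorphXn /= horner_algX.
have idem_f : Defs.idempotent f.
  have f_compl : f * horner_alg z (v * q) = 0.
    by rewrite -rmorphM /= mulrACA [_ * q]mulrC -def_p rmorphM /= pz0 mulr0.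
  have : f * (f + horner_alg z (v * q)) = f by rewrite -rmorphD bezout rmorph1 mulr1.
  by rewrite mulrDr f_compl addr0.
have zm_e : z ^+ m * e = z ^+ m by rewrite -(prednK m_gt0) exprSr -mulrA ze.
have e_zm : e * z ^+ m = z ^+ m by rewrite -(prednK m_gt0) exprS mulrA ez.
have fe : f * e = f by rewrite f_zm -mulrA zm_e.
have ef : e * f = f.
  have f_zm' : f = z ^+ m * horner_alg z u.
    by rewrite /f mulrC rmorphM /= rmorphXn /= horner_algX.
  by rewrite f_zm' mulrA e_zm.
have chi2f : chi2 f = 1.
  have := congr1 (horner^~ c) bezout; rewrite hornerD [(v * q).[c]]hornerM qc0.
  by rewrite mulr0 addr0 hornerC chi_horner.
have chi1f : chi1 f = 0.
  by rewrite f_zm chiM // chiX // chi1z expr0n (gtn_eqF m_gt0) mulr0.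
have [f0|fe'] := primitive_idempotent_corner prim_e idem_f ef fe.
  by move: chi2f; rewrite f0 chi0 // => /eqP; rewrite eq_sym oner_eq0.
by move: chi1f; rewrite fe' chi1e => /eqP; rewrite oner_eq0.
Qed.

Definition rideal_dim (g : A) := \dim (limg (amull g)).

Lemma amullE (u x : A) : amull u x = u * x.
Proof. by rewrite lfunE. Qed.

Lemma rideal_dim_lt (f o : A) : Defs.idempotent f -> Defs.idempotent o -> o != 0 ->
  f * o = 0 -> o * f = 0 -> (rideal_dim f < rideal_dim (f + o)%R)%N.
Proof.
move=> idem_f idem_o nz_o f_o o_f; set g := f + o.
have img_g x : g * x = x -> x \in limg (amull g) by move=> <-; rewrite -amullE memv_img ?memvf.
have sub_fg : (limg (amull f) <= limg (amull g))%VS.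
  apply/subvP => _ /memv_imgP[y _ ->]; apply: img_g.
  by rewrite amullE mulrA mulrDl idem_f o_f addr0.
have o_notin_f : o \notin limg (amull f).
  apply/negP => /memv_imgP[y _]; rewrite amullE => o_fy.
  by move/eqP: nz_o; apply; rewrite -idem_o {2}o_fy mulrA o_f mul0r.
rewrite /rideal_dim ltn_neqAle (dimvS sub_fg) andbT (dimv_leqif_eq sub_fg).2.
apply: contra o_notin_f => /eqP ->; apply: img_g.
by rewrite mulrDl f_o idem_o add0r.
Qed.

Lemma chi_idempotent_split chi g : is_char chi -> Defs.idempotent g -> chi g = 1 ->
  ~ primitive_idempotent g -> exists h, [/\ Defs.idempotent h, chi h = 1, g * h = h,
                                            h * g = h & (rideal_dim h < rideal_dim g)%N].
Proof.
move=> char_chi idem_g chig nprim_g.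
have nz_g : g != 0.
  by apply/eqP => g0; move: chig; rewrite g0 chi0 // => /eqP; rewrite eq_sym oner_eq0.
have [f [o [idem_f [idem_o [nz_f [nz_o [f_o [o_f def_g]]]]]]]] :
    exists f o : A, Defs.idempotent f /\ Defs.idempotent o /\ f != 0 /\ o != 0 /\
                    f * o = 0 /\ o * f = 0 /\ g = f + o.
  by apply: NNPP => no_split; apply: nprim_g; split.
have half (f1 f2 : A) : Defs.idempotent f1 -> Defs.idempotent f2 -> f2 != 0 ->
    f1 * f2 = 0 -> f2 * f1 = 0 -> g = f1 + f2 -> chi f1 = 1 ->
    exists h, [/\ Defs.idempotent h, chi h = 1, g * h = h, h * g = h &
                  (rideal_dim h < rideal_dim g)%N].
  move=> idem1 idem2 nz2 f12 f21 def_g' chi_f1; exists f1; rewrite def_g'.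
  by rewrite mulrDl mulrDr idem1 f12 f21 !addr0 rideal_dim_lt.
have chi_sum1 : chi f + chi o = 1 by rewrite -chiD // -def_g.
have [chi_o0|nz_chio] := eqVneq (chi o) 0.
  by apply: (half _ _ idem_f idem_o nz_o f_o o_f def_g); rewrite -chi_sum1 chi_o0 addr0.
apply: (half _ _ idem_o idem_f nz_f o_f f_o); first by rewrite def_g addrC.
by move: (chi_idempotent_eq1 char_chi idem_o nz_chio).
Qed.

Lemma chi_primitive_below chi g : is_char chi -> Defs.idempotent g -> chi g = 1 ->
  exists h, [/\ primitive_idempotent h, g * h = h, h * g = h & chi h = 1].
Proof.
move=> char_chi; have [n] := ubnP (rideal_dim g).
elim: n g => // n IH g lt_gn idem_g chig.
case: (classic (primitive_idempotent g)) => [prim_g|nprim_g]; first by exists g.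
have [f [idem_f chif gf fg lt_fg]] := chi_idempotent_split char_chi idem_g chig nprim_g.
have [h [prim_h fh hf chih]] := IH f (leq_trans lt_fg lt_gn) idem_f chif.
exists h; split=> //; first by rewrite -fh mulrA gf.
by rewrite -hf -mulrA fg.
Qed.

Lemma orthogonal_complement (E : {pred A}) (s : seq A) :
  orthogonal_idempotents E -> uniq s -> (forall e, e \in s -> e \in E) ->
  (forall e, e \in E -> e != 0 -> e \in s) ->
  let g := 1 - \sum_(e <- s) e in
  Defs.idempotent g /\ forall e, e \in E -> e * g = 0 /\ g * e = 0.
Proof.
move=> orthE uniq_s s_sub sub_s g.
have orth_g e : e \in E -> e * g = 0 /\ g * e = 0.
  move=> eE; have [->|nz_e] := eqVneq e 0; first by rewrite mul0r mulr0.
  have es := sub_s e eE nz_e.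
  have other x : x \in rem e s -> x \in E /\ e != x.
    move=> xs; split; first exact: s_sub (mem_rem xs).
    by move: xs; rewrite mem_rem_uniq // inE eq_sym => /andP[].
  rewrite /g mulrBr mulrBl mulr1 mul1r mulr_sumr mulr_suml !(big_rem e es) /= orthE.1 //.
  by rewrite !big1_seq ?addr0 ?subrr // => x /andP[_ /other[xE neq_ex]];
    apply: orthE.2; rewrite // eq_sym.
split=> //; rewrite /Defs.idempotent {1}/g mulrBl mul1r mulr_suml big1_seq ?subr0 //.
by move=> e /andP[_ es]; apply: (orth_g e (s_sub e es)).1.
Qed.

Lemma chi_complete_eq1 chi (E : {pred A}) : is_char chi ->
  complete_orthogonal_primitive_set E -> exists2 e, e \in E & chi e = 1.
Proof.
move=> char_chi [[orthE primE] maxE].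
have [s [uniq_s s_sub sub_s]] := orthogonal_idempotents_finite orthE.
have [/hasP[e es nz_chie]|/hasPn chi_s0] := boolP (has (fun e => chi e != 0) s).
  by exists e; [apply: s_sub | apply: chi_idempotent_eq1 (orthE.1 e (s_sub e es)) nz_chie].
have [idem_g orth_g] := orthogonal_complement orthE uniq_s s_sub sub_s.
set g := 1 - _ in idem_g orth_g.
have chig : chi g = 1.
  rewrite chiB // chi1 // chi_sum // big1_seq ?subr0 // => e /andP[_ es].
  by move: (chi_s0 e es); rewrite negbK => /eqP.
have [h [prim_h gh hg chih]] := chi_primitive_below char_chi idem_g chig.
have orth_h e : e \in E -> e * h = 0 /\ h * e = 0.
  move=> eE; have [eg ge] := orth_g e eE.
  by split; [rewrite -gh mulrA eg mul0r | rewrite -hg -mulrA ge mulr0].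
have hE : h \in E.
  apply: (maxE [pred x | (x \in E) || (x == h)]); last by rewrite inE eqxx orbT.
    split; [split|].
    - by move=> x; rewrite inE => /orP[/orthE.1 //|/eqP ->]; case: prim_h.
    - move=> x y; rewrite !inE => /orP[xE|/eqP->] /orP[yE|/eqP->] neq_xy.
      + exact: orthE.2.
      + exact: (orth_h x xE).1.
      + exact: (orth_h y yE).2.
      + by rewrite eqxx in neq_xy.
    - by move=> x; rewrite inE => /orP[/primE|/eqP ->].
  by move=> x xE; rewrite inE xE.
by case: prim_h => idem_h /eqP[]; rewrite -idem_h (orth_h h hE).1.
Qed.

Lemma chi_complete_eq chi1 chi2 (E : {pred A}) : is_char chi1 -> is_char chi2 ->
  complete_orthogonal_primitive_set E -> {in E, chi1 =1 chi2} -> chi1 =1 chi2.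
Proof.
move=> char1 char2 completeE eq_chiE x.
have [e eE chi1e] := chi_complete_eq1 char1 completeE.
have chi2e : chi2 e = 1 by rewrite -eq_chiE.
have [[_ primE] _] := completeE; have prim_e := primE e eE; have [idem_e _ _] := prim_e.
set y := e * x * e; set z := y - chi1 y *: e.
have chi1y : chi1 y = chi1 x by rewrite /y !chiM // chi1e mul1r mulr1.
have chi2y : chi2 y = chi2 x by rewrite /y !chiM // chi2e mul1r mulr1.
have ez : e * z = z by rewrite /z mulrBr /y !mulrA idem_e -scalerAr idem_e.
have ze : z * e = z by rewrite /z mulrBl /y -!mulrA idem_e -scalerAl idem_e.
have chi1z : chi1 z = 0 by rewrite /z chiB // chiZ // chi1e mulr1 subrr.
have /eqP := chi_corner_eq0 char1 char2 prim_e chi1e ez ze chi1z.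
by rewrite /z chiB // chiZ // chi2e mulr1 subr_eq0 chi2y chi1y => /eqP.
Qed.

End Characters.

Lemma triangular_rep_diag_char (k : fieldType) (A : falgType k) (d : nat)
    (mu : A -> 'M[k]_d) (j : 'I_d) :
  is_rep mu -> triangular_rep mu -> is_char (fun a => mu a j j).
Proof.
move=> [linear_mu mu1 muM] trig_mu; split.
- by move=> c x y; rewrite linear_mu !mxE.
- by rewrite mu1 mxE eqxx.
move=> x y; rewrite muM mxE (bigD1 j) //= big1 ?addr0 // => l neq_lj.
case: (ltngtP l j) => [lt_lj|lt_jl|/val_inj eq_lj].
- by rewrite trig_mu ?mul0r.
- by rewrite [mu y l j]trig_mu ?mulr0.
- by rewrite eq_lj eqxx in neq_lj.
Qed.

Section Equivalence.
Variables (k : fieldType) (A : falgType k) (d : nat) (rhoM rhoN : A -> 'M[k]_d).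

Lemma isoseries_triangular_reps (SM SN : nat -> 'M[k]_d) (E : {pred A}) :
  is_rep rhoM -> is_rep rhoN -> composition_series rhoM SM -> composition_series rhoN SN ->
  (forall i, (0 < i <= d)%N -> subquot_iso rhoM (SM i.-1) (SM i) rhoN (SN i.-1) (SN i)) ->
  orthogonal_idempotents E ->
  exists mu nu : A -> 'M[k]_d,
    is_rep mu /\ is_rep nu /\ rep_of mu rhoM /\ rep_of nu rhoN /\
    triangular_rep mu /\ triangular_rep nu /\ (forall e, e \in E -> mu e = nu e).
Proof.
move=> repM repN compM compN isoMN orthE.
have [s [uniq_s s_sub sub_s]] := orthogonal_idempotents_finite orthE.
have [WM [flagM compWM diagM]] := exists_adapted_flag repM compM orthE uniq_s s_sub sub_s.
have [WN [flagN compWN diagN]] := exists_adapted_flag repN compN orthE uniq_s s_sub sub_s.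
have [repM' ofM trigM] := flag_rep_triangular repM flagM.
have [repN' ofN trigN] := flag_rep_triangular repN flagN.
exists (flag_rep rhoM WM), (flag_rep rhoN WN); do 6!split=> //.
move=> e eE; apply/matrixP => i j; rewrite /flag_rep [LHS]mxE [RHS]mxE.
have [<-|neq_ji] := eqVneq j i; last by rewrite diagM // diagN.
have [le_jd lt_jd] := (ltnW (ltn_ord j), ltn_ord j).
exact: subquot_iso_diag flagM flagN (compWM _ le_jd) (compWM _ lt_jd)
                        (compWN _ le_jd) (compWN _ lt_jd) (isoMN j.+1 lt_jd).
Qed.

Lemma triangular_reps_isoseries (E : {pred A}) (mu nu : A -> 'M[k]_d) :
  complete_orthogonal_primitive_set E -> is_rep mu -> is_rep nu ->
  rep_of mu rhoM -> rep_of nu rhoN -> triangular_rep mu -> triangular_rep nu ->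
  (forall e, e \in E -> mu e = nu e) ->
  exists SM SN : nat -> 'M[k]_d,
    [/\ composition_series rhoM SM, composition_series rhoN SN &
        forall i, (0 < i <= d)%N ->
          subquot_iso rhoM (SM i.-1) (SM i) rhoN (SN i.-1) (SN i)].
Proof.
move=> completeE rep_mu rep_nu ofM ofN trig_mu trig_nu eq_muE.
have [WM [flagM WM_mu]] := triangular_rep_flag trig_mu ofM.
have [WN [flagN WN_nu]] := triangular_rep_flag trig_nu ofN.
have eq_diag (j : 'I_d) a : basis_mx rhoM WM a j j = basis_mx rhoN WN a j j.
  have /matrixP/(_ j j) := WM_mu a; have /matrixP/(_ j j) := WN_nu a.
  rewrite !mxE => -> ->.
  apply: (chi_complete_eq (triangular_rep_diag_char j rep_mu trig_mu)
                          (triangular_rep_diag_char j rep_nu trig_nu) completeE).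
  by move=> e eE /=; rewrite eq_muE.
exists (fun i => (pid_mx i : 'M[k]_d) *m WM), (fun i => (pid_mx i : 'M[k]_d) *m WN).
split; [exact: flag_composition_series | exact: flag_composition_series |].
by case=> // j /= lt_jd; exact: (flag_subquot_iso flagM flagN (eq_diag (Ordinal lt_jd))).
Qed.

End Equivalence.

Unset Implicit Arguments. Set Strict Implicit.

Theorem proposition4p1 (k : closedFieldType) (A : falgType k) (d : nat)
    (rhoM rhoN : A -> 'M[k]_d) :
  basic_algebra A -> is_rep rhoM -> is_rep rhoN ->
  let P1 := exists SM SN : nat -> 'M[k]_d,
      [/\ composition_series rhoM SM, composition_series rhoN SN &
          forall i, (0 < i <= d)%N ->
            subquot_iso rhoM (SM i.-1) (SM i) rhoN (SN i.-1) (SN i)] in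
  let P2 := forall E : {pred A}, orthogonal_idempotents E ->
      exists mu nu : A -> 'M[k]_d,
      is_rep mu /\ is_rep nu /\ rep_of mu rhoM /\ rep_of nu rhoN /\
      triangular_rep mu /\ triangular_rep nu /\
      (forall e, e \in E -> mu e = nu e) in
  let P3 := exists E : {pred A}, complete_orthogonal_primitive_set E /\
      exists mu nu : A -> 'M[k]_d,
      is_rep mu /\ is_rep nu /\ rep_of mu rhoM /\ rep_of nu rhoN /\
      triangular_rep mu /\ triangular_rep nu /\
      (forall e, e \in E -> mu e = nu e) in
  (P1 <-> P2) /\ (P2 <-> P3).
Proof.
move=> [E [completeE _]] repM repN P1 P2 P3.
have P12 : P1 -> P2.
  move=> [SM [SN [compM compN isoMN]]] E' orthE'.
  exact: isoseries_triangular_reps repM repN compM compN isoMN orthE'.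
have P23 : P2 -> P3.
  by move=> P2_holds; exists E; split=> //; apply: P2_holds; case: completeE => [[]].
have P31 : P3 -> P1.
  move=> [E' [completeE' [mu [nu [rep_mu [rep_nu [ofM [ofN [trig_mu [trig_nu eqE]]]]]]]]]].
  exact: triangular_reps_isoseries completeE' rep_mu rep_nu ofM ofN trig_mu trig_nu eqE.
tauto.
Qed.
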